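(* Let $f=\prod_{i=1}^n(x-r_i)^{e_i}\in k[x]$ with $r_1,\ldots,r_n\in k$ pairwise distinct and $e_i\ge1$. Then \[\det\Sigma(f)=\pm\prod_{1\le i<j\le n}(r_i-r_j)^{e_ie_j},\qquad\text{hence}\qquad \mathfrak{D}(f)=\prod_{1\le i<j\le n}(r_i-r_j)^{2e_ie_j}.\]
   Context: Let $N=\sum_ie_i$. $\Sigma(f)$ is the $N\times N$ matrix whose columns are indexed by pairs $(\ell,j)$ with $1\le\ell\le n$, $1\le j\le e_\ell$ (ordered lexicographically) and rows by $i=0,\ldots,N-1$, with $(i,(\ell,j))$ entry the coefficient of $x^i$ in $f/(x-r_\ell)^j$; equivalently $\Sigma(f)^\intercal$ is the change-of-basis matrix from the monomial basis $\{1,x,\ldots,x^{N-1}\}$ of $k[x]/(f)$ to the Newton basis $\{f/(x-r_\ell)^j\}$. The duplicant is $\mathfrak{D}(f):=(\det\Sigma(f))^2$. *)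

From HB Require Import structures.
From mathcomp Require Import all_boot all_order all_algebra.
Set Implicit Arguments. Unset Strict Implicit. Unset Printing Implicit Defensive.
Import GRing.Theory.
Local Open Scope ring_scope.

Definition polyf (k : fieldType) (n : nat) (r : 'I_n -> k) (e : 'I_n -> nat)
  : {poly k} := \prod_(i < n) ('X - (r i)%:P) ^+ e i.

Definition Ndeg (n : nat) (e : 'I_n -> nat) : nat := (\sum_(i < n) e i)%N.

(* Column labels (l, j), 1 <= j <= e_l, in lexicographic order; we record
   the root r_l together with the exponent j. *)
Definition col_labels (k : fieldType) (n : nat) (r : 'I_n -> k) (e : 'I_n -> nat)
  : seq (k * nat) :=
  flatten [seq [seq (r l, j) | j <- iota 1 (e l)] | l <- enum 'I_n].

Definition Sigma (k : fieldType) (n : nat) (r : 'I_n -> k) (e : 'I_n -> nat)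
  : 'M[k]_(Ndeg e) :=
  \matrix_(i < Ndeg e, c < Ndeg e)
    let lj := nth (0, 0%N) (col_labels r e) c in
    (polyf r e %/ ('X - lj.1%:P) ^+ lj.2)`_i.

Definition duplicant (k : fieldType) (n : nat) (r : 'I_n -> k) (e : 'I_n -> nat)
  : k := (\det (Sigma r e)) ^+ 2.

(* Translating x to x + r_1 is a unitriangular
   change of the monomial basis, so it leaves det Sigma unchanged and lets us
   assume r_1 = 0.  Then the first e_1 Newton polynomials are x^(e_1 - j) h with
   h = f / x^(e_1), and the remaining ones are x^(e_1) times the Newton basis of
   h.  The coefficient matrix is block lower triangular; its upper-left block is
   anti-triangular with h(0) on the antidiagonal, so
   det Sigma(f) = +-h(0)^(e_1) det Sigma(h), and h(0) = prod_(j > 1) (r_1 - r_j)^(e_j). *)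

From HB Require Import structures.
From mathcomp Require Import all_boot all_order all_algebra.
From mathcomp Require Import perm zify ring.
Import GRing.Theory.
Local Open Scope ring_scope.

Set Implicit Arguments. Unset Strict Implicit. Unset Printing Implicit Defensive.

Section NewtonBasis.

Variable k : fieldType.

(* A factored polynomial is a list of (root, multiplicity) pairs. *)
Implicit Types (s t : seq (k * nat)) (a : k).

Definition poly_of_mroots s : {poly k} := \prod_(p <- s) ('X - p.1%:P) ^+ p.2.

Definition mroots_deg s : nat := sumn (unzip2 s).

Definition newton_labels s : seq (k * nat) :=
  flatten [seq [seq (p.1, j) | j <- iota 1 p.2] | p <- s].

Definition newton_basis s : seq {poly k} :=
  [seq poly_of_mroots s %/ ('X - lj.1%:P) ^+ lj.2 | lj <- newton_labels s].

Definition coef_det (N : nat) (ps : seq {poly k}) : k :=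
  \det (\matrix_(i < N, c < N) (ps`_c)`_i).

Fixpoint mroots_resultant s : k :=
  if s is p :: t then
    (\prod_(q <- t) (p.1 - q.1) ^+ (p.2 * q.2)) * mroots_resultant t
  else 1.

Definition mroot_shift a (p : k * nat) := (p.1 - a, p.2).

Lemma poly_of_mroots_cons a e t :
  poly_of_mroots ((a, e) :: t) = ('X - a%:P) ^+ e * poly_of_mroots t.
Proof. by rewrite /poly_of_mroots big_cons. Qed.

Lemma size_newton_labels s : size (newton_labels s) = mroots_deg s.
Proof.
elim: s => [|[a e] t IH] //=.
by rewrite /newton_labels /= size_cat size_map size_iota -/(newton_labels t) IH.
Qed.

Lemma size_newton_basis s : size (newton_basis s) = mroots_deg s.
Proof. by rewrite size_map size_newton_labels. Qed.

Lemma size_poly_of_mroots s : size (poly_of_mroots s) = (mroots_deg s).+1.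
Proof.
elim: s => [|[a e] t IH]; first by rewrite /poly_of_mroots big_nil size_poly1.
have Xa_neq0 : ('X - a%:P) ^+ e != 0 by rewrite expf_neq0 // polyXsubC_eq0.
have f_neq0 : poly_of_mroots t != 0 by rewrite -size_poly_gt0 IH.
rewrite poly_of_mroots_cons size_mul // size_exp_XsubC IH /mroots_deg /=; lia.
Qed.

Lemma horner_poly_of_mroots s x :
  (poly_of_mroots s).[x] = \prod_(q <- s) (x - q.1) ^+ q.2.
Proof.
rewrite /poly_of_mroots horner_prod; apply: eq_bigr => q _.
by rewrite horner_exp hornerXsubC.
Qed.

Lemma newton_labelsP s lj : lj \in newton_labels s ->
  ('X - lj.1%:P) ^+ lj.2 %| poly_of_mroots s /\ (1 <= lj.2)%N.
Proof.
elim: s => [|[a e] t IH] //=.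
rewrite /newton_labels /= mem_cat -/(newton_labels t) poly_of_mroots_cons.
case/orP => [/mapP [j] | /IH [dvd_t j_gt0]]; last by rewrite dvdp_mull.
rewrite mem_iota => /andP [j_gt0 j_le] ->; split=> //=.
by apply/dvdp_mulr/dvdp_exp2l; rewrite add1n in j_le.
Qed.

Lemma size_newton_basis_le s :
  all (fun p : {poly k} => (size p <= mroots_deg s)%N) (newton_basis s).
Proof.
apply/allP => p /mapP [lj /newton_labelsP [dvd_lj lj_gt0] ->].
rewrite size_divp ?expf_neq0 ?polyXsubC_eq0 // size_poly_of_mroots.
by rewrite size_exp_XsubC /= leq_subLR -add1n leq_add2r.
Qed.

Lemma newton_basis_cons a e t :
  newton_basis ((a, e) :: t) =
  [seq ('X - a%:P) ^+ (e - j) * poly_of_mroots t | j <- iota 1 e] ++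
  [seq ('X - a%:P) ^+ e * q | q <- newton_basis t].
Proof.
rewrite /newton_basis /newton_labels /= map_cat -/(newton_labels t) -map_comp.
congr (_ ++ _).
  apply/eq_in_map => j; rewrite mem_iota => /andP [j_gt0 j_le] /=.
  rewrite poly_of_mroots_cons -{1}(subnK (_ : j <= e)%N); last by lia.
  by rewrite exprD mulrAC mulpK // expf_neq0 // polyXsubC_eq0.
rewrite -map_comp; apply/eq_in_map => lj /newton_labelsP [dvd_lj _] /=.
by rewrite poly_of_mroots_cons divp_mulA.
Qed.

Lemma comp_XsubC_XaddC a b :
  ('X - b%:P) \Po ('X + a%:P) = 'X - (b - a)%:P.
Proof. rewrite comp_polyB comp_polyX comp_polyC polyCB; ring. Qed.

Lemma poly_of_mroots_shift a s :
  poly_of_mroots (map (mroot_shift a) s) = poly_of_mroots s \Po ('X + a%:P).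
Proof.
rewrite /poly_of_mroots big_map rmorph_prod; apply: eq_bigr => p _.
by rewrite rmorphXn /= comp_XsubC_XaddC.
Qed.

Lemma newton_labels_shift a s :
  newton_labels (map (mroot_shift a) s) = map (mroot_shift a) (newton_labels s).
Proof.
rewrite /newton_labels map_flatten -!map_comp; congr flatten.
by apply: eq_map => p /=; rewrite -map_comp.
Qed.

Lemma newton_basis_shift a s :
  newton_basis (map (mroot_shift a) s) =
  map (fun p => p \Po ('X + a%:P)) (newton_basis s).
Proof.
rewrite /newton_basis newton_labels_shift -!map_comp.
apply/eq_in_map => lj /newton_labelsP [dvd_lj _] /=.
rewrite poly_of_mroots_shift -{1}(divpK dvd_lj) comp_polyM rmorphXn /=.
by rewrite comp_XsubC_XaddC mulpK // expf_neq0 // polyXsubC_eq0.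
Qed.

Lemma mroots_deg_shift a s : mroots_deg (map (mroot_shift a) s) = mroots_deg s.
Proof. by rewrite /mroots_deg /unzip2 -map_comp. Qed.

Lemma coef_det_comp_XaddC N (ps : seq {poly k}) a :
  all (fun p : {poly k} => (size p <= N)%N) ps ->
  coef_det N (map (fun p => p \Po ('X + a%:P)) ps) = coef_det N ps.
Proof.
move=> ps_small; rewrite /coef_det.
have XaddC_E i : ('X + a%:P) ^+ i = ('X - (- a)%:P) ^+ i by rewrite polyCN opprK.
pose T := \matrix_(i < N, j < N) (('X + a%:P) ^+ j)`_i.
have -> : \matrix_(i < N, c < N) ((map (fun p => p \Po ('X + a%:P)) ps)`_c)`_i
    = T *m \matrix_(i < N, c < N) (ps`_c)`_i.
  apply/matrixP => i c; rewrite !mxE.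
  have [c_lt|c_ge] := ltnP c (size ps); last first.
    rewrite (@nth_default _ 0 (map _ ps) c) ?size_map // coef0 big1 // => j _.
    by rewrite !mxE (@nth_default _ 0 ps c) // coef0 mulr0.
  have size_c : (size (ps`_c)%R <= N)%N by move/allP: ps_small; apply; apply: mem_nth.
  rewrite (nth_map 0) // comp_polyE coef_sum.
  rewrite (big_ord_widen N (fun j => (ps`_c`_j *: ('X + a%:P) ^+ j)`_i)) //.
  rewrite big_mkcond /=; apply: eq_bigr => j _; rewrite !mxE coefZ mulrC.
  by case: ltnP => // j_ge; rewrite [ps`_c`_j]nth_default ?mulr0.
rewrite det_mulmx.
(* T is upper unitriangular: ('X + a)^j is monic of degree j. *)
have -> : \det T = 1.
  rewrite -det_tr det_trig.
    apply: big1 => i _; rewrite !mxE XaddC_E.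
    have /monicP := monic_exp i (monicXsubC (- a)).
    by rewrite /lead_coef size_exp_XsubC.
  apply/is_trig_mxP => i j ij.
  by rewrite !mxE nth_default // XaddC_E size_exp_XsubC.
by rewrite mul1r.
Qed.

Lemma coef_det_newton_shift a s :
  coef_det (mroots_deg s) (newton_basis (map (mroot_shift a) s)) =
  coef_det (mroots_deg s) (newton_basis s).
Proof.
by rewrite newton_basis_shift coef_det_comp_XaddC // size_newton_basis_le.
Qed.

Lemma det_coef_rev_XnM e (h : {poly k}) : exists b : bool,
  \det (\matrix_(i < e, c < e) ('X^(e - c.+1) * h)`_i) = (-1) ^+ b * h`_0 ^+ e.
Proof.
set Q0 := \matrix_(i < e, c < e) ('X^c * h)`_i.
have det_Q0 : \det Q0 = h`_0 ^+ e.
  rewrite det_trig; last by apply/is_trig_mxP => i j ij; rewrite mxE coefXnM ij.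
  rewrite (eq_bigr (fun _ => h`_0)) ?prodr_const ?card_ord // => i _.
  by rewrite mxE coefXnM ltnn subnn.
set rev := perm (@rev_ord_inj e).
have -> : \matrix_(i < e, c < e) ('X^(e - c.+1) * h)`_i = col_perm rev Q0.
  by apply/matrixP => i c; rewrite !mxE permE.
exists (odd_perm rev^-1).
by rewrite col_permE det_mulmx det_perm det_Q0 mulrC.
Qed.

Lemma coef_det_cat_XnM e (h : {poly k}) (B : seq {poly k}) : exists b : bool,
  coef_det (e + size B)
    ([seq 'X^(e - j) * h | j <- iota 1 e] ++ [seq 'X^e * q | q <- B])
  = (-1) ^+ b * h`_0 ^+ e * coef_det (size B) B.
Proof.
have [b det_Q] := det_coef_rev_XnM e h; exists b.
pose R := \matrix_(i < size B, c < e) ('X^(e - c.+1) * h)`_(e + i).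
rewrite /coef_det -det_Q -(det_lblock _ R); congr (\det _); apply/matrixP => i c.
rewrite !mxE; case: splitP => i' ->; rewrite !mxE; case: splitP => c' ->.
all: rewrite !mxE nth_cat size_map size_iota.
- by rewrite ltn_ord (nth_map 0) ?size_iota // nth_iota.
- by rewrite ltnNge leq_addr /= addKn (nth_map 0) // coefXnM ltn_ord.
- by rewrite ltn_ord (nth_map 0) ?size_iota // nth_iota.
- by rewrite ltnNge leq_addr /= addKn (nth_map 0) // coefXnM ltnNge leq_addr /= addKn.
Qed.

Lemma coef_det_newton_cons a e t : exists b : bool,
  coef_det (mroots_deg ((a, e) :: t)) (newton_basis ((a, e) :: t)) =
  (-1) ^+ b * \prod_(q <- t) (a - q.1) ^+ (e * q.2)
    * coef_det (mroots_deg t) (newton_basis t).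
Proof.
set t' := map (mroot_shift a) t.
have shift_cons : map (mroot_shift a) ((a, e) :: t) = (0, e) :: t'.
  by rewrite /= /mroot_shift subrr.
have deg_cons : mroots_deg ((a, e) :: t) = (e + size (newton_basis t'))%N.
  by rewrite size_newton_basis mroots_deg_shift.
have coef0_t' : (poly_of_mroots t')`_0 ^+ e = \prod_(q <- t) (a - q.1) ^+ (e * q.2).
  rewrite -horner_coef0 horner_poly_of_mroots big_map -prodrXl.
  by apply: eq_bigr => q _; rewrite -exprM mulnC /mroot_shift /= opprB add0r.
rewrite -(coef_det_newton_shift a ((a, e) :: t)) shift_cons newton_basis_cons deg_cons subr0.
have [b ->] := coef_det_cat_XnM e (poly_of_mroots t') (newton_basis t').
by exists b; rewrite coef0_t' size_newton_basis mroots_deg_shift coef_det_newton_shift.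
Qed.

Lemma coef_det_newton_basis s : exists b : bool,
  coef_det (mroots_deg s) (newton_basis s) = (-1) ^+ b * mroots_resultant s.
Proof.
elim: s => [|[a e] t [b IH]]; first by exists false; rewrite /coef_det det_mx00 mul1r.
have [b' ->] := coef_det_newton_cons a e t.
by exists (b' (+) b); rewrite IH signr_addb /=; ring.
Qed.

End NewtonBasis.

Definition mroots_of (k : fieldType) n (r : 'I_n -> k) (e : 'I_n -> nat) :
  seq (k * nat) := [seq (r l, e l) | l <- enum 'I_n].

Lemma det_Sigma_coef_det (k : fieldType) n (r : 'I_n -> k) (e : 'I_n -> nat) :
  \det (Sigma r e) =
  coef_det (mroots_deg (mroots_of r e)) (newton_basis (mroots_of r e)).
Proof.
have f_E : polyf r e = poly_of_mroots (mroots_of r e).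
  by rewrite /polyf /poly_of_mroots big_map big_enum.
have labels_E : col_labels r e = newton_labels (mroots_of r e).
  by rewrite /newton_labels -map_comp.
have deg_E : Ndeg e = mroots_deg (mroots_of r e).
  by rewrite /Ndeg /mroots_deg /unzip2 -map_comp sumnE big_map big_enum.
rewrite /coef_det -deg_E; congr (\det _); apply/matrixP => i c.
rewrite !mxE f_E labels_E (nth_map (0, 0%N)) //.
by rewrite size_newton_labels -deg_E.
Qed.

Lemma mroots_resultant_of (k : fieldType) n (r : 'I_n -> k) (e : 'I_n -> nat) :
  mroots_resultant (mroots_of r e) =
  \prod_(i < n) \prod_(j < n | (i < j)%N) (r i - r j) ^+ (e i * e j).
Proof.
elim: n r e => [|n IH] r e; first by rewrite /mroots_of enum_ord0 big_ord0.
rewrite /mroots_of enum_ordSl /= -map_comp.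
rewrite (IH (r \o lift ord0) (e \o lift ord0)) big_ord_recl; congr (_ * _).
  rewrite big_map big_enum /= [RHS]big_mkcond big_ord_recl /= mul1r.
  by apply: eq_big.
apply: eq_bigr => i _; rewrite [RHS]big_mkcond big_ord_recl /= mul1r.
by rewrite [LHS]big_mkcond.
Qed.

Theorem mainTheorem10 (k : fieldType) (n : nat) (r : 'I_n -> k)
    (e : 'I_n -> nat) :
  injective r -> (forall i, (1 <= e i)%N) ->
  (exists s : bool,
     \det (Sigma r e) =
       (-1) ^+ s * \prod_(i < n) \prod_(j < n | (i < j)%N)
                     (r i - r j) ^+ (e i * e j)) /\
  duplicant r e =
    \prod_(i < n) \prod_(j < n | (i < j)%N) (r i - r j) ^+ (2 * (e i * e j)).
Proof.
move=> _ _.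
have [b det_E] := coef_det_newton_basis (mroots_of r e).
rewrite -det_Sigma_coef_det mroots_resultant_of in det_E.
split; first by exists b.
rewrite /duplicant det_E exprMn sqrr_sign mul1r -prodrXl.
apply: eq_bigr => i _; rewrite -prodrXl; apply: eq_bigr => j _.
by rewrite -exprM mulnC.
Qed.
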